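(* Let $n\geq2$ and $d\geq0$. Any solution $u:(d,\infty)\to\mathbb{R}^+$ of $$u''(x)=\Big[\frac{xu'(x)-u(x)}{2}+\frac{n-1}{u(x)}\Big]\big(1+(u'(x))^2\big)$$ satisfies, for some constant $\sigma=\sigma(u)\geq0$, the identity $$u(x)=2(n-1)x\int_x^\infty\frac{1}{t^2}\bigg\{\int_t^\infty\frac{s}{2}\,\frac{1+(u'(s))^2}{u(s)}\,e^{-\frac12\int_t^s z(1+(u'(z))^2)\,dz}\,ds\bigg\}dt+\sigma x$$ for all $x\in(d,\infty)$. *)

From Stdlib Require Import Reals.
From Coquelicot Require Import Coquelicot.
Open Scope R_scope.

Definition ode_rhs (n : nat) (u : R -> R) (x : R) : R :=
  ((x * Derive u x - u x) / 2 + (INR n - 1) / u x) * (1 + (Derive u x) ^ 2).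

Definition is_solution (n : nat) (d : R) (u : R -> R) : Prop :=
  forall x, d < x ->
    0 < u x /\ ex_derive u x /\ ex_derive (Derive u) x /\
    Derive (Derive u) x = ode_rhs n u x.

Definition weight (u : R -> R) (t s : R) : R :=
  exp (- / 2 * RInt (fun z => z * (1 + (Derive u z) ^ 2)) t s).

Definition inner_integrand (u : R -> R) (t s : R) : R :=
  s / 2 * ((1 + (Derive u s) ^ 2) / u s) * weight u t s.

Definition inner (u : R -> R) (t : R) : R :=
  RInt_gen (inner_integrand u t) (at_point t) (Rbar_locally p_infty).

(* Writing [v := x u' - u] and [F' = x (1 + u'^2)], the ODE makes [W := v exp (-F/2)]
   nondecreasing with [W' = 2 (n-1) (x/2) ((1 + u'^2)/u) exp (-F/2)], and [W] tends to [0]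
   at infinity. Hence the inner integral telescopes to [-v(t)/(2(n-1))], which is
   [-t^2 (u/t)'/(2(n-1))], and the outer one to [(u(x)/x - sigma)/(2(n-1))], where
   [sigma >= 0] is the limit of the nonincreasing positive function [u(x)/x]. *)

From Stdlib Require Import Reals Lra Classical.
From Coquelicot Require Import Coquelicot.
Open Scope R_scope.

Lemma MVT_lower_bound (g dg : R -> R) (t s m : R) : t <= s ->
  (forall y, t <= y <= s -> is_derive g y (dg y)) ->
  (forall y, t <= y <= s -> m <= dg y) -> m * (s - t) <= g s - g t.
Proof.
  intros hts hd hm.
  destruct (MVT_gen g t s dg) as [y [hy ->]];
    rewrite ?Rmin_left, ?Rmax_right in * by lra.
  - intros y hy. apply hd; lra.
  - intros y hy. apply continuity_pt_filterlim.
    apply (ex_derive_continuous (K := R_AbsRing) (V := R_NormedModule)).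
    exists (dg y). apply hd; lra.
  - apply Rmult_le_compat_r; [lra | apply hm; lra].
Qed.

Lemma MVT_upper_bound (g dg : R -> R) (t s m : R) : t <= s ->
  (forall y, t <= y <= s -> is_derive g y (dg y)) ->
  (forall y, t <= y <= s -> dg y <= m) -> g s - g t <= m * (s - t).
Proof.
  intros hts hd hm.
  enough (-m * (s - t) <= - g s - - g t) by lra.
  apply (MVT_lower_bound (fun y => - g y) (fun y => - dg y)); [exact hts | |].
  - intros y hy. apply (is_derive_opp g). now apply hd.
  - intros y hy. specialize (hm y hy). lra.
Qed.

Lemma is_lim_nondecreasing_bounded (f : R -> R) (d M : R) :
  (forall x y, d < x -> x <= y -> f x <= f y) ->
  (forall x, d < x -> f x <= M) ->
  exists l, l <= M /\ (forall x, d < x -> f x <= l) /\ is_lim f p_infty l.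
Proof.
  intros f_mono f_bound.
  pose (values := fun z => exists x, d < x /\ z = f x).
  destruct (completeness values) as [l [l_ub l_least]].
  - exists M. intros z [x [hx ->]]. now apply f_bound.
  - exists (f (d + 1)), (d + 1). split; [lra | reflexivity].
  - assert (le_l : forall x, d < x -> f x <= l)
      by (intros x hx; apply l_ub; now exists x).
    exists l. split; [apply l_least; intros z [x [hx ->]]; now apply f_bound |].
    split; [exact le_l |].
    apply is_lim_spec. intros eps.
    destruct (classic (exists x, d < x /\ l - eps < f x)) as [[x [hx hfx]] | none].
    + exists x. intros y hy. specialize (f_mono x y hx (Rlt_le _ _ hy)).
      specialize (le_l y ltac:(lra)). rewrite Rabs_left1; lra.
    + enough (l <= l - eps) by (destruct eps; simpl in *; lra).
      apply l_least. intros z [x [hx ->]].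
      apply Rnot_lt_le. intros hfx. apply none. now exists x.
Qed.

Lemma is_RInt_gen_primitive (f P : R -> R) (t L : R) :
  (forall x, t <= x -> is_derive P x (f x)) ->
  (forall x, t <= x -> continuous f x) ->
  is_lim P p_infty L ->
  is_RInt_gen f (at_point t) (Rbar_locally p_infty) (L - P t).
Proof.
  intros hP hf hlim Q [eps heps].
  apply is_lim_spec in hlim. destruct (hlim eps) as [M hM].
  apply Filter_prod with (Q := fun a => a = t) (R := fun b => Rmax M t < b).
  - reflexivity.
  - now exists (Rmax M t).
  - intros a b -> hb. simpl.
    assert (M < b /\ t < b) as [hMb htb] by (split; eapply Rle_lt_trans;
      [apply Rmax_l | exact hb | apply Rmax_r | exact hb]).
    exists (P b - P t). split.
    + apply (is_RInt_derive P f); rewrite Rmin_left, Rmax_right by lra;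
        intros x hx; [apply hP | apply hf]; lra.
    + apply heps. specialize (hM b hMb). simpl in hM.
      change (Rabs (P b - P t - (L - P t)) < eps).
      now replace (P b - P t - (L - P t)) with (P b - L) by ring.
Qed.

Lemma is_RInt_gen_at_point_ext (f g : R -> R) (t l : R) :
  (forall x, t < x -> f x = g x) ->
  is_RInt_gen f (at_point t) (Rbar_locally p_infty) l ->
  is_RInt_gen g (at_point t) (Rbar_locally p_infty) l.
Proof.
  intros hfg. apply is_RInt_gen_ext.
  apply Filter_prod with (Q := fun a => a = t) (R := fun b => t < b).
  - reflexivity.
  - now exists t.
  - intros a b -> hb x. simpl. rewrite Rmin_left, Rmax_right by lra.
    intros hx. apply hfg. lra.
Qed.

Lemma ex_RInt_continuous_on_open (f : R -> R) (d p q : R) :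
  (forall z, d < z -> continuous f z) -> d < p -> d < q -> ex_RInt f p q.
Proof.
  intros hf hp hq. apply (ex_RInt_continuous (V := R_CompleteNormedModule)).
  intros z hz. apply hf.
  destruct (Rle_dec p q); [rewrite Rmin_left in hz | rewrite Rmin_right in hz]; lra.
Qed.

Lemma is_derive_RInt_open (f : R -> R) (d a y : R) : d < a -> d < y ->
  (forall z, d < z -> continuous f z) -> is_derive (RInt f a) y (f y).
Proof.
  intros ha hy hf. apply (is_derive_RInt f (RInt f a) a y); [| now apply hf].
  assert (hyd : 0 < y - d) by lra.
  exists (mkposreal _ hyd). intros b hb. apply Rabs_lt_between in hb.
  simpl in hb. unfold minus, plus, opp in hb; simpl in hb.
  apply (RInt_correct (V := R_CompleteNormedModule)).
  apply (ex_RInt_continuous_on_open f d); auto; lra.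
Qed.

Lemma RInt_Chasles_sub (f : R -> R) (d a p q : R) :
  (forall z, d < z -> continuous f z) -> d < a -> d < p -> d < q ->
  RInt f a q - RInt f a p = RInt f p q.
Proof.
  intros hf ha hp hq.
  rewrite <- (RInt_Chasles (V := R_CompleteNormedModule) f a p q)
    by (apply (ex_RInt_continuous_on_open f d); auto).
  unfold plus; simpl. ring.
Qed.

Section SelfSimilarSolution.

Variables (c d a : R) (u u' u'' F : R -> R).

Hypothesis c_pos : 0 < c.
Hypothesis d_ge0 : 0 <= d.
Hypothesis d_lt_a : d < a.
Hypothesis u_pos : forall y, d < y -> 0 < u y.
Hypothesis u_derive : forall y, d < y -> is_derive u y (u' y).
Hypothesis u'_derive : forall y, d < y -> is_derive u' y (u'' y).
Hypothesis u_ode : forall y, d < y ->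
  u'' y = ((y * u' y - u y) / 2 + c / u y) * (1 + u' y ^ 2).
Hypothesis F_derive : forall y, d < y -> is_derive F y (y * (1 + u' y ^ 2)).
Hypothesis F_a : F a = 0.

(* [defect y = y ^ 2 * (u y / y)'] *)
Definition defect (y : R) : R := y * u' y - u y.
Definition scaled_defect (y : R) : R := defect y * exp (- / 2 * F y).
Definition kernel (s : R) : R := s / 2 * ((1 + u' s ^ 2) / u s).
Definition chord_slope (y : R) : R := u y / y.

Lemma kernel_ge0 (y : R) : d < y -> 0 <= kernel y.
Proof.
  intros hy. unfold kernel. apply Rmult_le_pos; [lra |].
  apply Rlt_le, Rdiv_lt_0_compat; [pose proof (pow2_ge_0 (u' y)); lra | auto].
Qed.

(* Substituting the ODE for [y u''] cancels the [- defect * F' / 2] term. *)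
Lemma scaled_defect_derive (y : R) : d < y ->
  is_derive scaled_defect y (2 * c * kernel y * exp (- / 2 * F y)).
Proof.
  intros hy. pose proof (u_pos y hy).
  unfold scaled_defect, defect, kernel. auto_derive.
  - repeat split; eexists; eauto.
  - rewrite (is_derive_unique (fun t : R => u t) _ _ (u_derive y hy)),
      (is_derive_unique (fun t : R => u' t) _ _ (u'_derive y hy)),
      (is_derive_unique (fun t : R => F t) _ _ (F_derive y hy)), u_ode by exact hy.
    field. lra.
Qed.

Lemma scaled_defect_nondecreasing (x y : R) : d < x -> x <= y ->
  scaled_defect x <= scaled_defect y.
Proof.
  intros hx hxy.
  enough (0 * (y - x) <= scaled_defect y - scaled_defect x) by lra.
  apply (MVT_lower_bound scaled_defect (fun z => 2 * c * kernel z * exp (- / 2 * F z)));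
    [exact hxy | |]; intros z hz.
  - apply scaled_defect_derive. lra.
  - apply Rmult_le_pos; [| apply Rlt_le, exp_pos].
    apply Rmult_le_pos; [lra | apply kernel_ge0; lra].
Qed.

Lemma F_ge_quadratic (y : R) : a <= y -> (y ^ 2 - a ^ 2) / 2 <= F y.
Proof.
  intros hy.
  enough (0 * (y - a) <= (F y - y ^ 2 / 2) - (F a - a ^ 2 / 2)) by lra.
  apply (MVT_lower_bound (fun z => F z - z ^ 2 / 2)
           (fun z => z * (1 + u' z ^ 2) - z)); [lra | |]; intros z hz.
  - assert (hF := F_derive z ltac:(lra)). auto_derive; [eexists; eauto |].
    rewrite (is_derive_unique (fun t : R => F t) _ _ hF). field.
  - pose proof (pow2_ge_0 (u' z)). nra.
Qed.

Lemma defect_eq (y : R) : defect y = scaled_defect y * exp (/ 2 * F y).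
Proof.
  unfold scaled_defect. rewrite Rmult_assoc, <- exp_plus.
  replace (- / 2 * F y + / 2 * F y) with 0 by ring. rewrite exp_0. ring.
Qed.

Lemma exp_half_F_ge (y : R) : 2 * a <= y -> y ^ 2 / 8 <= exp (/ 2 * F y).
Proof.
  intros hy. pose proof (exp_ineq1_le (/ 2 * F y)).
  pose proof (F_ge_quadratic y ltac:(lra)). nra.
Qed.

Lemma atan_u'_derive (y : R) : d < y ->
  is_derive (fun t => atan (u' t)) y (defect y / 2 + c / u y).
Proof.
  intros hy. pose proof (u_pos y hy). pose proof (pow2_ge_0 (u' y)).
  replace (defect y / 2 + c / u y) with (u'' y * / (1 + u' y ^ 2))
    by (rewrite u_ode by exact hy; unfold defect; field; lra).
  apply (is_derive_comp atan u'); [| now apply u'_derive].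
  apply is_derive_Reals, derivable_pt_lim_atan.
Qed.

(* If [scaled_defect] became positive, [atan u'] would grow at a fixed positive rate forever. *)
Lemma scaled_defect_nonpos (y : R) : d < y -> scaled_defect y <= 0.
Proof.
  intros hy. apply Rnot_lt_le. intros hw.
  set (w := scaled_defect y) in hw.
  set (y1 := Rmax y a).
  assert (y <= y1 /\ a <= y1) as [hy1 ha1] by (split; [apply Rmax_l | apply Rmax_r]).
  assert (defect_ge : forall z, y1 <= z -> w <= defect z).
  { intros z hz. rewrite defect_eq.
    assert (w <= scaled_defect z) by (apply scaled_defect_nondecreasing; lra).
    assert (1 <= exp (/ 2 * F z)).
    { pose proof (exp_ineq1_le (/ 2 * F z)). pose proof (F_ge_quadratic z ltac:(lra)). nra. }
    nra. }
  pose proof PI_RGT_0.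
  pose (T := 2 * PI / w).
  assert (0 < T) by (apply Rdiv_lt_0_compat; lra).
  assert (PI <= atan (u' (y1 + T)) - atan (u' y1)).
  { replace PI with (w / 2 * (y1 + T - y1)) by (unfold T; field; lra).
    apply (MVT_lower_bound (fun t => atan (u' t)) (fun t => defect t / 2 + c / u t));
      [lra | |]; intros z hz.
    - apply atan_u'_derive. lra.
    - assert (0 < c / u z) by (apply Rdiv_lt_0_compat; [| apply u_pos]; lra).
      pose proof (defect_ge z ltac:(lra)). lra. }
  pose proof (atan_bound (u' (y1 + T))). pose proof (atan_bound (u' y1)). lra.
Qed.

Lemma chord_slope_derive (y : R) : d < y -> is_derive chord_slope y (defect y / y ^ 2).
Proof.
  intros hy. assert (hu := u_derive y hy).
  unfold chord_slope, defect. auto_derive; [split; [eexists; eauto | lra] |].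
  rewrite (is_derive_unique (fun t : R => u t) _ _ hu). field. lra.
Qed.

Lemma chord_slope_pos (y : R) : d < y -> 0 < chord_slope y.
Proof. intros hy. apply Rdiv_lt_0_compat; [apply u_pos |]; lra. Qed.

(* A negative bound [l] would force [(u y / y)' <= l / 8] for [y >= 2 a], driving [u] negative. *)
Lemma scaled_defect_ub_ge0 (l : R) : (forall y, d < y -> scaled_defect y <= l) -> 0 <= l.
Proof.
  intros hl. apply Rnot_lt_le. intros hneg.
  assert (slope_le : forall y, 2 * a <= y -> defect y / y ^ 2 <= l / 8).
  { intros y hy. assert (0 < y ^ 2) by (apply pow_lt; lra).
    apply Rmult_le_reg_r with (y ^ 2); [lra |].
    replace (defect y / y ^ 2 * y ^ 2) with (defect y) by (field; lra).
    rewrite defect_eq. pose proof (exp_half_F_ge y hy).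
    pose proof (hl y ltac:(lra)). nra. }
  pose (y0 := 2 * a). pose (T := 8 * chord_slope y0 / - l).
  assert (0 < chord_slope y0) by (apply chord_slope_pos; unfold y0; lra).
  assert (0 < T) by (apply Rdiv_lt_0_compat; lra).
  assert (chord_slope (y0 + T) - chord_slope y0 <= l / 8 * (y0 + T - y0)).
  { apply (MVT_upper_bound chord_slope (fun y => defect y / y ^ 2)); [lra | |];
      intros y hy; [apply chord_slope_derive | apply slope_le]; unfold y0 in *; lra. }
  replace (l / 8 * (y0 + T - y0)) with (- chord_slope y0) in * by (unfold T; field; lra).
  pose proof (chord_slope_pos (y0 + T) ltac:(unfold y0 in *; lra)). lra.
Qed.

Lemma is_lim_scaled_defect : is_lim scaled_defect p_infty 0.
Proof.
  destruct (is_lim_nondecreasing_bounded scaled_defect d 0) as [l [hl0 [hle hlim]]].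
  - exact scaled_defect_nondecreasing.
  - exact scaled_defect_nonpos.
  - replace 0 with l; [exact hlim |].
    pose proof (scaled_defect_ub_ge0 l hle). lra.
Qed.

Lemma inner_integral (t : R) : d < t ->
  is_RInt_gen (fun s => kernel s * exp (- / 2 * (F s - F t)))
    (at_point t) (Rbar_locally p_infty) (- defect t / (2 * c)).
Proof.
  intros ht. pose (k := exp (/ 2 * F t) / (2 * c)).
  replace (- defect t / (2 * c)) with (k * 0 - k * scaled_defect t)
    by (unfold k; rewrite defect_eq; field; lra).
  apply (is_RInt_gen_primitive _ (fun s => k * scaled_defect s)).
  - intros s hs.
    replace (kernel s * exp (- / 2 * (F s - F t)))
      with (k * (2 * c * kernel s * exp (- / 2 * F s))).
    + apply is_derive_scal, scaled_defect_derive. lra.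
    + unfold k. replace (- / 2 * (F s - F t)) with (- / 2 * F s + / 2 * F t) by ring.
      rewrite exp_plus. field. lra.
  - intros s hs. pose proof (u_pos s ltac:(lra)).
    assert (ex_derive u s) by (eexists; apply u_derive; lra).
    assert (ex_derive u' s) by (eexists; apply u'_derive; lra).
    assert (ex_derive F s) by (eexists; apply F_derive; lra).
    apply (ex_derive_continuous (K := R_AbsRing) (V := R_NormedModule)).
    unfold kernel. auto_derive. repeat split; first [assumption | lra].
  - exact (is_lim_scal_l _ k _ _ is_lim_scaled_defect).
Qed.

Lemma chord_slope_nonincreasing (x y : R) : d < x -> x <= y ->
  chord_slope y <= chord_slope x.
Proof.
  intros hx hxy.
  enough (chord_slope y - chord_slope x <= 0 * (y - x)) by lra.
  apply (MVT_upper_bound chord_slope (fun z => defect z / z ^ 2)); [exact hxy | |];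
    intros z hz; [apply chord_slope_derive; lra |].
  rewrite defect_eq. pose proof (scaled_defect_nonpos z ltac:(lra)).
  pose proof (exp_pos (/ 2 * F z)). assert (0 < z ^ 2) by (apply pow_lt; lra).
  apply Rmult_le_0_r; [nra | apply Rlt_le, Rinv_0_lt_compat; lra].
Qed.

Lemma is_lim_chord_slope : exists sigma, 0 <= sigma /\ is_lim chord_slope p_infty sigma.
Proof.
  destruct (is_lim_nondecreasing_bounded (fun y => - chord_slope y) d 0)
    as [l [hl0 [_ hlim]]].
  - intros x y hx hxy. pose proof (chord_slope_nonincreasing x y hx hxy). lra.
  - intros x hx. pose proof (chord_slope_pos x hx). lra.
  - exists (- l). split; [lra |].
    apply (is_lim_ext (fun y => - - chord_slope y)); [intros y; ring |].
    exact (is_lim_opp _ _ _ hlim).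
Qed.

Lemma outer_integral : exists sigma, 0 <= sigma /\ forall x, d < x ->
  is_RInt_gen (fun t => / t ^ 2 * (- defect t / (2 * c)))
    (at_point x) (Rbar_locally p_infty) ((chord_slope x - sigma) / (2 * c)).
Proof.
  destruct is_lim_chord_slope as [sigma [hsigma hlim]].
  exists sigma. split; [exact hsigma |]. intros x hx.
  pose (k := - / (2 * c)).
  replace ((chord_slope x - sigma) / (2 * c)) with (k * sigma - k * chord_slope x)
    by (unfold k; field; lra).
  apply (is_RInt_gen_primitive _ (fun t => k * chord_slope t)).
  - intros t ht. replace (/ t ^ 2 * (- defect t / (2 * c))) with (k * (defect t / t ^ 2))
      by (unfold k; field; split; lra).
    apply is_derive_scal, chord_slope_derive. lra.
  - intros t ht.
    assert (ex_derive u t) by (eexists; apply u_derive; lra).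
    assert (ex_derive u' t) by (eexists; apply u'_derive; lra).
    assert (t * (t * 1) <> 0) by (apply Rmult_integral_contrapositive; split; lra).
    apply (ex_derive_continuous (K := R_AbsRing) (V := R_NormedModule)).
    unfold defect. auto_derive. repeat split; assumption.
  - exact (is_lim_scal_l _ k _ _ hlim).
Qed.

Lemma integral_representation : exists sigma, 0 <= sigma /\
  (forall t, d < t -> is_RInt_gen (fun s => kernel s * exp (- / 2 * (F s - F t)))
     (at_point t) (Rbar_locally p_infty) (- defect t / (2 * c))) /\
  forall x, d < x -> is_RInt_gen (fun t => / t ^ 2 * (- defect t / (2 * c)))
    (at_point x) (Rbar_locally p_infty) ((chord_slope x - sigma) / (2 * c)).
Proof.
  destruct outer_integral as [sigma [hsigma outer]].
  exists sigma. split; [exact hsigma |]. split; [exact inner_integral | exact outer].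
Qed.

End SelfSimilarSolution.

Theorem lemma2 (n : nat) (d : R) (u : R -> R)
  (hn : (2 <= n)%nat) (hd : 0 <= d) (hu : is_solution n d u) :
  exists sigma : R, 0 <= sigma /\
    forall x, d < x ->
      (forall t, x <= t ->
         ex_RInt_gen (inner_integrand u t) (at_point t) (Rbar_locally p_infty)) /\
      exists I : R,
        is_RInt_gen (fun t => / t ^ 2 * inner u t) (at_point x)
          (Rbar_locally p_infty) I /\
        u x = 2 * (INR n - 1) * x * I + sigma * x.
Proof.
  set (c := INR n - 1).
  assert (c_pos : 0 < c) by (apply le_INR in hn; simpl in hn; unfold c; lra).
  pose (f := fun z => z * (1 + Derive u z ^ 2)).
  assert (f_cont : forall z, d < z -> continuous f z).
  { intros z hz. apply (ex_derive_continuous (K := R_AbsRing) (V := R_NormedModule)).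
    unfold f. auto_derive. apply hu, hz. }
  pose (F := RInt f (d + 1)).
  destruct (integral_representation c d (d + 1) u (Derive u) (Derive (Derive u)) F)
    as [sigma [hsigma [inner_rep outer_rep]]]; auto; try lra;
    try (intros y hy; now apply hu); try (intros y hy; now apply Derive_correct, hu).
  - intros y hy. apply (is_derive_RInt_open f d); auto; lra.
  - apply (RInt_point (V := R_CompleteNormedModule)).
  - assert (inner_eq : forall t, d < t -> is_RInt_gen (inner_integrand u t)
      (at_point t) (Rbar_locally p_infty) (- defect u (Derive u) t / (2 * c))).
    { intros t ht. eapply is_RInt_gen_at_point_ext; [| now apply inner_rep].
      intros s hs. unfold inner_integrand, weight, kernel, F.
      rewrite (RInt_Chasles_sub f d); auto; lra. }
    exists sigma. split; [exact hsigma |]. intros x hx. split.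
    + intros t ht. eexists. apply inner_eq. lra.
    + exists ((chord_slope u x - sigma) / (2 * c)). split.
      * eapply is_RInt_gen_at_point_ext; [| now apply outer_rep].
        intros t ht. unfold inner. f_equal. symmetry.
        apply is_RInt_gen_unique, inner_eq. lra.
      * unfold chord_slope. field. lra.
Qed.
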